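(* Let $N$ be a non-negative integer and let $h_1,h_2,l_1,l_2,\alpha_1,\alpha_2,\beta,E$ satisfy $\beta=N+1$. Then the singularity $x=0$ of the $q$-Heun equation $A^{\langle4\rangle}(x;h_1,h_2,l_1,l_2,\alpha_1,\alpha_2,\beta)g(x)=Eg(x)$ is apparent (in the sense of the context) if and only if $c(E)=0$, where $c(E)$ is the polynomial defined in the context.
   Context: $q\in\mathbb{C}$ with $0<|q|<1$; powers via a fixed branch of $\log q$; $t_1,t_2$ fixed non-zero constants. $A^{\langle 4\rangle}(x;h_1,h_2,l_1,l_2,\alpha_1,\alpha_2,\beta)=x^{-1}(x-q^{h_1+1/2}t_1)(x-q^{h_2+1/2}t_2)T_x^{-1}+q^{\alpha_1+\alpha_2}x^{-1}(x-q^{l_1-1/2}t_1)(x-q^{l_2-1/2}t_2)T_x-\{(q^{\alpha_1}+q^{\alpha_2})x+q^{(h_1+h_2+l_1+l_2+\alpha_1+\alpha_2)/2}(q^{\beta/2}+q^{-\beta/2})t_1t_2x^{-1}\}$, where $T_x^{\pm1}g(x)=g(q^{\pm1}x)$. Let $\lambda_1=(h_1+h_2-l_1-l_2-\alpha_1-\alpha_2-\beta+2)/2$. Apparency: a formal series $x^{\lambda_1}\sum_{n\ge0}d_nx^n$ solves the equation iff for all $n\ge1$ (with $d_{-1}=0$) $d_nt_1t_2q^{1-n+h_1+h_2-\lambda_1}(1-q^n)(1-q^{n-\beta})-d_{n-1}[E+q^{3/2-n-\lambda_1}(q^{h_1}t_1+q^{h_2}t_2)+q^{n-3/2+\lambda_1+\alpha_1+\alpha_2}(q^{l_1}t_1+q^{l_2}t_2)]+d_{n-2}q^{2-n-\lambda_1}(1-q^{n-2+\lambda_1+\alpha_1})(1-q^{n-2+\lambda_1+\alpha_2})=0$.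 With $\beta=N+1$, set $d_0=1$ and determine $d_1,\dots,d_N$ uniquely from these relations for $n=1,\dots,N$; the singularity $x=0$ is called apparent if the relation for $n=N+1$ (in which the coefficient of $d_{N+1}$ vanishes) then holds. The polynomial $c(E)$: set $x_n=t_1t_2q^{n-N+1+h_1+h_2-\alpha_1-2\lambda_1}(1-q^{-n})(1-q^{N-n+\lambda_1+\alpha_1})$, $y_n=q^{N-n+1/2+\lambda_1+\alpha_1+\alpha_2}(q^{l_1}t_1+q^{l_2}t_2)+q^{n-N-1/2-\lambda_1}(q^{h_1}t_1+q^{h_2}t_2)$, $z_n=q^{n-N-2+\alpha_1}(1-q^{N-n+1+\lambda_1+\alpha_2})(1-q^{N-n+2})$, and $c(E)=\sum(-1)^kx_{i_1}z_{i_1+1}\cdots x_{i_k}z_{i_k+1}\prod_{j\in\{1,\dots,N+1\}\setminus\{i_1,i_1+1,\dots,i_k,i_k+1\}}(E+y_j)$, summed over $k\ge0$ and integers $1\le i_1<\dots<i_k\le N$ with $i_{l+1}-i_l\ge2$. (When all $x_n\ne0$, this equals $x_1\cdots x_N[c_N(E)(E+y_{N+1})-c_{N-1}(E)z_{N+1}]$ where $c_{-1}=0$, $c_0=1$, $c_n(E)x_n=c_{n-1}(E)(E+y_n)-c_{n-2}(E)z_n$.) *)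

From HB Require Import structures.
From mathcomp Require Import all_boot all_order all_algebra.
From mathcomp Require Import all_classical all_reals.
From mathcomp Require Import sequences exp trigo.
From mathcomp Require Import complex.
Set Implicit Arguments. Unset Strict Implicit. Unset Printing Implicit Defensive.
Import Order.TTheory GRing.Theory Num.Theory.
Local Open Scope ring_scope.

Section QHeun.
Variable R : realType.
Local Notation C := (R[i]).

Definition cexp (z : C) : C :=
  Complex (expR (complex.Re z) * cos (complex.Im z)) (expR (complex.Re z) * sin (complex.Im z)).

(* q^a := exp(a * L), where L is the fixed branch of log q (exp L = q). *)
Definition qpow (L a : C) : C := cexp (a * L).

Variables (L t1 t2 h1 h2 l1 l2 al1 al2 be E : C).
Local Notation Q := (qpow L).

Definition lambda1 : C := (h1 + h2 - l1 - l2 - al1 - al2 - be + 2) / 2.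

Definition recA (n : nat) : C :=
  t1 * t2 * Q (1 - n%:R + h1 + h2 - lambda1) * (1 - Q n%:R) * (1 - Q (n%:R - be)).
Definition recB (n : nat) : C :=
  E + Q (3/2 - n%:R - lambda1) * (Q h1 * t1 + Q h2 * t2)
    + Q (n%:R - 3/2 + lambda1 + al1 + al2) * (Q l1 * t1 + Q l2 * t2).
Definition recC (n : nat) : C :=
  Q (2 - n%:R - lambda1) * (1 - Q (n%:R - 2 + lambda1 + al1))
    * (1 - Q (n%:R - 2 + lambda1 + al2)).

Definition rel (n : nat) (dm2 dm1 dn : C) : Prop :=
  dn * recA n - dm1 * recB n + dm2 * recC n = 0.

(* dpair n = (d_{n-1}, d_n), with d_{-1} = 0, d_0 = 1, and d_n solved from
   the relation for n (n >= 1) *)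
Fixpoint dpair (n : nat) : C * C :=
  match n with
  | 0 => (0, 1)
  | m.+1 => let: (a, b) := dpair m in
            (b, (b * recB m.+1 - a * recC m.+1) / recA m.+1)
  end.

(* x = 0 is apparent: with d_0 = 1 and d_1..d_N determined by the relations
   n = 1..N, the relation for n = N+1 holds (its d_{N+1}-coefficient
   vanishes when be = N+1, so d_{N+1} is arbitrary). *)
Definition apparent (N : nat) : Prop :=
  exists dN1 : C, rel N.+1 (dpair N).1 (dpair N).2 dN1.

Definition cx (N n : nat) : C :=
  t1 * t2 * Q (n%:R - N%:R + 1 + h1 + h2 - al1 - 2 * lambda1)
    * (1 - Q (- n%:R)) * (1 - Q (N%:R - n%:R + lambda1 + al1)).
Definition cy (N n : nat) : C :=
  Q (N%:R - n%:R + 1/2 + lambda1 + al1 + al2) * (Q l1 * t1 + Q l2 * t2)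
  + Q (n%:R - N%:R - 1/2 - lambda1) * (Q h1 * t1 + Q h2 * t2).
Definition cz (N n : nat) : C :=
  Q (n%:R - N%:R - 2 + al1) * (1 - Q (N%:R - n%:R + 1 + lambda1 + al2))
    * (1 - Q (N%:R - n%:R + 2)).

(* A set S of indices i in {1..N} (encoded as i' : 'I_N with i = i'+1)
   is admissible when it contains no two consecutive indices, i.e. the
   sorted elements i_1 < ... < i_k satisfy i_{l+1} - i_l >= 2. *)
Definition admissible (N : nat) (S : {set 'I_N}) : bool :=
  [forall i in S, forall j in S, (val i).+1 != val j].

(* j in {1..N+1} (encoded as j' : 'I_N.+1, j = j'+1) is covered by S when
   j = i or j = i+1 for some i in S *)
Definition covered (N : nat) (S : {set 'I_N}) (j : 'I_N.+1) : bool :=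
  [exists i in S, (val i == val j) || ((val i).+1 == val j)].

Definition cE (N : nat) : C :=
  \sum_(S : {set 'I_N} | admissible S)
     (-1) ^+ #|S| * (\prod_(i in S) (cx N (val i).+1 * cz N (val i).+2))
     * \prod_(j : 'I_N.+1 | ~~ covered S j) (E + cy N (val j).+1).

End QHeun.

From HB Require Import structures.
From mathcomp Require Import all_boot all_order all_algebra.
From mathcomp Require Import all_classical all_reals.
From mathcomp Require Import sequences exp trigo.
From mathcomp Require Import complex.
From mathcomp Require Import zify ring.
Set Implicit Arguments. Unset Strict Implicit. Unset Printing Implicit Defensive.
Import Order.TTheory GRing.Theory Num.Theory.
Local Open Scope ring_scope.

(* With A n := recA n, B n := recB n, C n := recC n the relations read
   d n * A n = d (n-1) * B n - d (n-2) * C n.  As |q| < 1 and beta = N+1,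
   A 1, ..., A N are non-zero while A (N+1) = 0, so the relation for N+1 is the
   constraint d N * B (N+1) = d (N-1) * C (N+1); multiplied by A 1 ... A N it says
   that the continuant D (N+1) vanishes, where D n = B n D (n-1) - A (n-1) C n D (n-2).
   Expanding a continuant along its last index gives the signed sum over sets of
   disjoint dimers {i, i+1} that defines c(E), with the indices read backwards:
   x (N+1-i) z (N+2-i) = A i C (i+1) and E + y (N+2-i) = B i. *)

Section DimerExpansion.
Variable R : comNzRingType.
Implicit Types (w b : nat -> R) (n k : nat) (p : pred nat).

(* [natset S] forgets the bound of [S], so that sets of different sizes can be
   compared. *)
Definition natset n (S : {set 'I_n}) : pred nat := [pred k | [exists i in S, val i == k]].

Definition nonadjacent n p := [forall i : 'I_n, p i ==> ~~ p i.+1].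

Definition covered_by p : pred nat := [pred j | p j || ((0 < j)%N && p j.-1)].

Definition dimer_term w b n p : R :=
  (-1) ^+ (\sum_(i < n | p i) 1)%N * \prod_(i < n | p i) w i
  * \prod_(j < n.+1 | ~~ covered_by p j) b j.

Definition dimer_sum w b n : R :=
  \sum_(S : {set 'I_n} | admissible S) (-1) ^+ #|S| * (\prod_(i in S) w (val i))
     * \prod_(j : 'I_n.+1 | ~~ covered S j) b (val j).

Lemma natset_ord n (S : {set 'I_n}) (i : 'I_n) : natset S i = (i \in S).
Proof.
apply/existsP/idP => [[j /andP[jS /eqP e]]|iS].
  by have <- : j = i by apply: val_inj.
by exists i; rewrite iS eqxx.
Qed.

Lemma natset_out n (S : {set 'I_n}) k : (n <= k)%N -> natset S k = false.
Proof.
move=> nk; apply/existsP => [[j /andP[_ /eqP e]]].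
by have := ltn_ord j; rewrite e ltnNge nk.
Qed.

Lemma natset_inj n (S1 S2 : {set 'I_n}) : natset S1 =1 natset S2 -> S1 = S2.
Proof. by move=> h; apply/setP => i; rewrite -!natset_ord h. Qed.

Lemma natset_imset n m (f : 'I_n -> 'I_m) (S : {set 'I_n}) :
  (forall i, val (f i) = val i) -> natset (f @: S) =1 natset S.
Proof.
move=> hf k; apply/existsP/existsP => [[j /andP[/imsetP[i iS ->] e]]|[i /andP[iS e]]].
  by exists i; rewrite iS -hf.
by exists (f i); rewrite imset_f // hf.
Qed.

Lemma natset_preimset n m (f : 'I_n -> 'I_m) (S : {set 'I_m}) :
  (forall i, val (f i) = val i) ->
  natset [set i | f i \in S] =1 [pred k | (k < n)%N && natset S k].
Proof.
move=> hf k; apply/existsP/andP => [[i /andP[]]|[kn /existsP[j /andP[jS /eqP e]]]].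
  rewrite inE => iS /eqP e; split; first by rewrite -e ltn_ord.
  by apply/existsP; exists (f i); rewrite iS /= hf e.
exists (Ordinal kn); rewrite inE /=.
have -> : f (Ordinal kn) = j by apply: val_inj; rewrite hf.
by rewrite jS eqxx.
Qed.

Lemma natset_setU1 n (a : 'I_n) (S : {set 'I_n}) k :
  natset (a |: S) k = (val a == k) || natset S k.
Proof.
apply/existsP/orP => [[j /andP[]]|].
  rewrite in_setU1 => /orP[/eqP->|jS] e; first by left.
  by right; apply/existsP; exists j; rewrite jS.
case=> [e|/existsP[j /andP[jS e]]]; first by exists a; rewrite setU11.
by exists j; rewrite in_setU1 jS orbT.
Qed.

Lemma natset_set1 n (a : 'I_n) k : natset [set a] k = (val a == k).
Proof.
apply/existsP/eqP => [[j /andP[/set1P -> /eqP]]|<-] //.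
by exists a; rewrite set11 eqxx.
Qed.

Lemma natset_rev n (S : {set 'I_n}) :
  natset ((@rev_ord n) @: S) =1 [pred k | (k < n)%N && natset S (n.-1 - k)%N].
Proof.
move=> k; apply/existsP/andP.
  case=> j /andP[/imsetP[i iS ->] /eqP /= e]; have := ltn_ord i.
  split; first by lia.
  by apply/existsP; exists i; rewrite iS /=; apply/eqP; lia.
case=> kn /existsP[i /andP[iS /eqP /= e]].
exists (rev_ord i); rewrite imset_f //=; apply/eqP.
by move: e; have := ltn_ord i; lia.
Qed.

Lemma nonadjacentP n p :
  reflect (forall i, (i < n)%N -> p i -> ~~ p i.+1) (nonadjacent n p).
Proof.
apply: (iffP forallP) => H i.
  by move=> ilt pi; have := H (Ordinal ilt); rewrite /= pi.
by apply/implyP; apply: H.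
Qed.

Lemma eq_nonadjacent n p p' : p =1 p' -> nonadjacent n p = nonadjacent n p'.
Proof. by move=> e; apply: eq_forallb => i; rewrite !e. Qed.

Lemma eq_dimer_term w b n p p' : p =1 p' -> dimer_term w b n p = dimer_term w b n p'.
Proof.
move=> e; rewrite /dimer_term; congr (_ ^+ _ * _ * _).
- by apply: eq_bigl => i; rewrite e.
- by apply: eq_bigl => i; rewrite e.
- by apply: eq_bigl => i; rewrite /covered_by /= !e.
Qed.

Lemma eq_dimer_term_weights w b w' b' n p :
  (forall i, (i < n)%N -> w i = w' i) -> (forall j, (j <= n)%N -> b j = b' j) ->
  dimer_term w b n p = dimer_term w' b' n p.
Proof.
move=> hw hb; rewrite /dimer_term; congr (_ * _ * _).
  by apply: eq_bigr => i _; apply: hw.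
by apply: eq_bigr => j _; apply: hb; rewrite -ltnS.
Qed.

Lemma covered_natset n (S : {set 'I_n}) (j : 'I_n.+1) :
  covered S j = covered_by (natset S) j.
Proof.
apply/existsP/orP.
  case=> i /andP[iS /orP[e|/eqP e]].
    by left; apply/existsP; exists i; rewrite iS.
  by right; rewrite -e /=; apply/existsP; exists i; rewrite iS eqxx.
case=> [/existsP[i /andP[iS e]]|/andP[j0 /existsP[i /andP[iS /eqP e]]]].
  by exists i; rewrite iS e.
by exists i; rewrite iS /= e prednK ?eqxx ?orbT.
Qed.

Lemma admissible_natset n (S : {set 'I_n}) : admissible S = nonadjacent n (natset S).
Proof.
apply/idP/idP => H.
  apply/forallP => i; apply/implyP; rewrite natset_ord => iS.
  apply/negP => /existsP[j /andP[jS /eqP e]].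
  by have := forallP H i; rewrite iS /= => /forallP /(_ j); rewrite jS e eqxx.
apply/forallP => i; apply/implyP => iS; apply/forallP => j; apply/implyP => jS.
apply/negP => /eqP e; have := forallP H i; rewrite natset_ord iS /= => /negP; apply.
by apply/existsP; exists j; rewrite jS e eqxx.
Qed.

Lemma dimer_sumE w b n :
  dimer_sum w b n =
  \sum_(S : {set 'I_n} | nonadjacent n (natset S)) dimer_term w b n (natset S).
Proof.
apply: eq_big => [S|S _]; first exact: admissible_natset.
rewrite /dimer_term; congr (_ ^+ _ * _ * _).
- by rewrite -sum1_card; apply: eq_bigl => i; rewrite natset_ord.
- by apply: eq_bigl => i; rewrite natset_ord.
- by apply: eq_bigl => j; rewrite covered_natset.
Qed.

Section Extension.
Variable p : pred nat.

Lemma dimer_term0 w b : (forall k, p k = false) -> dimer_term w b 0 p = b 0.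
Proof.
move=> p0; rewrite /dimer_term !big_ord0 expr0 mul1r.
by rewrite big_mkcond big_ord_recr big_ord0 /= /covered_by /= p0 /= !mul1r.
Qed.

Variable n : nat.
Hypothesis p_out : forall k, (n <= k)%N -> p k = false.

Lemma nonadjacentS : nonadjacent n.+1 p = nonadjacent n p.
Proof.
apply/nonadjacentP/nonadjacentP => H i ilt pi; first by apply: H => //; apply: leqW.
have [iln|nle] := ltnP i n; first exact: H.
by rewrite p_out in pi.
Qed.

Lemma dimer_termS w b : dimer_term w b n.+1 p = b n.+1 * dimer_term w b n p.
Proof.
rewrite /dimer_term.
have -> : (\sum_(i < n.+1 | p i) 1)%N = (\sum_(i < n | p i) 1)%N.
  by rewrite big_mkcond big_ord_recr /= p_out // addn0 -big_mkcond.
have -> : \prod_(i < n.+1 | p i) w i = \prod_(i < n | p i) w i.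
  by rewrite big_mkcond big_ord_recr /= p_out // mulr1 -big_mkcond.
rewrite [X in _ * X = _]big_mkcond big_ord_recr /= /covered_by /= !p_out //= -big_mkcond.
ring.
Qed.

Lemma nonadjacent_dimer :
  nonadjacent n.+2 [pred k | (n.+1 == k) || p k] = nonadjacent n p.
Proof.
apply/nonadjacentP/nonadjacentP => H i ilt /=.
  move=> pi; have := H i (leqW (leqW ilt)); rewrite /= pi orbT => /(_ isT).
  by rewrite negb_or => /andP[].
case/orP => [/eqP <-|pi].
  by rewrite negb_or (@p_out n.+2) ?andbT; lia.
have iltn : (i < n)%N by case: (ltnP i n) => // /p_out; rewrite pi.
by rewrite negb_or H // andbT; lia.
Qed.

Lemma dimer_term_dimer w b :
  dimer_term w b n.+2 [pred k | (n.+1 == k) || p k] = - w n.+1 * dimer_term w b n p.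
Proof.
rewrite /dimer_term /=.
have ne i : (i < n)%N -> (n.+1 == i) = false by lia.
have nn : (n.+1 == n) = false by lia.
have -> : (\sum_(i < n.+2 | (n.+1 == i) || p i) 1)%N = (\sum_(i < n | p i) 1)%N.+1.
  rewrite big_mkcond !big_ord_recr /= eqxx (@p_out n) // nn /= addn0 addn1.
  by congr _.+1; rewrite [RHS]big_mkcond; apply: eq_bigr => i _; rewrite ne.
have -> : \prod_(i < n.+2 | (n.+1 == i) || p i) w i = (\prod_(i < n | p i) w i) * w n.+1.
  rewrite big_mkcond !big_ord_recr /= eqxx (@p_out n) // nn /= mulr1.
  by congr (_ * _); rewrite [RHS]big_mkcond; apply: eq_bigr => i _; rewrite ne.
have -> : \prod_(j < n.+3 | ~~ covered_by [pred k | (n.+1 == k) || p k] j) b j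
          = \prod_(j < n.+1 | ~~ covered_by p j) b j.
  rewrite big_mkcond !big_ord_recr /= /covered_by /= eqxx /= !orbT /= !mulr1 nn /=.
  rewrite (_ : (n.+1 == n.-1) = false); last by lia.
  rewrite [RHS]big_mkcond big_ord_recr /=; congr (_ * _).
  apply: eq_bigr => i _; have := ltn_ord i => ilt.
  by rewrite ne // (ne i.-1) //; lia.
rewrite exprS; ring.
Qed.

Lemma nonadjacent_rev :
  nonadjacent n [pred k | (k < n)%N && p (n.-1 - k)%N] = nonadjacent n p.
Proof.
apply/nonadjacentP/nonadjacentP => H i ilt /=.
  move=> pi; apply/negP => pi1.
  have i1n : (i.+1 < n)%N by case: (ltnP i.+1 n) => // /p_out; rewrite pi1.
  have := H (n.-1 - i.+1)%N; rewrite /=.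
  have -> : (n.-1 - (n.-1 - i.+1) = i.+1)%N by lia.
  have -> : (n.-1 - (n.-1 - i.+1).+1 = i)%N by lia.
  have -> : ((n.-1 - i.+1).+1 < n)%N = true by lia.
  have -> : ((n.-1 - i.+1) < n)%N = true by lia.
  by rewrite pi pi1 => /(_ isT isT).
case/andP => _ pi; apply/negP => /andP[i1n pi1].
have := H (n.-1 - i.+1)%N.
have -> : ((n.-1 - i.+1).+1 = n.-1 - i)%N by lia.
by rewrite pi pi1 => /(_ ltac:(lia) isT).
Qed.

Lemma dimer_term_rev w b :
  dimer_term w b n [pred k | (k < n)%N && p (n.-1 - k)%N] =
  dimer_term (fun i => w (n.-1 - i)%N) (fun j => b (n - j)%N) n p.
Proof.
rewrite /dimer_term; congr (_ ^+ _ * _ * _).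
- rewrite [RHS](reindex_inj rev_ord_inj); apply: eq_bigl => i /=.
  by rewrite ltn_ord /=; congr (p _); have := ltn_ord i; lia.
- rewrite [RHS](reindex_inj rev_ord_inj); apply: eq_big => i /=.
    by rewrite ltn_ord /=; congr (p _); have := ltn_ord i; lia.
  by move=> _; congr (w _); have := ltn_ord i; lia.
rewrite [RHS](reindex_inj rev_ord_inj); apply: eq_big => j /=; last first.
  by move=> _; congr (b _); have := ltn_ord j; lia.
have := ltn_ord j; rewrite ltnS => jn.
have -> : (n.+1 - j.+1 = n - j)%N by lia.
congr (~~ _); rewrite /covered_by /=.
case: (nat_of_ord j) jn => [|j'] jn /=; first by rewrite !subn0 (@p_out n) // orbF.
have -> : (n.-1 - j' = n - j'.+1)%N by lia.
have -> : (n.-1 - j'.+1 = (n - j'.+1).-1)%N by lia.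
have -> : (j' < n)%N = true by lia.
have -> : (j'.+1 < n)%N = (0 < n - j'.+1)%N by lia.
by rewrite orbC.
Qed.

End Extension.

Lemma dimer_sum0 w b : dimer_sum w b 0 = b 0.
Proof.
rewrite dimer_sumE (eq_bigl (pred1 finset.set0)) ?big_pred1_eq.
  by rewrite dimer_term0 // => k; rewrite natset_out.
move=> S /=; rewrite (_ : S == finset.set0); last by apply/eqP/setP => [[]].
by apply/nonadjacentP.
Qed.

Lemma dimer_sum_last_free w b n :
  \sum_(S : {set 'I_n.+1} | nonadjacent n.+1 (natset S) && ~~ natset S n)
    dimer_term w b n.+1 (natset S)
  = b n.+1 * dimer_sum w b n.
Proof.
rewrite dimer_sumE big_distrr /=.
pose f := widen_ord (leqnSn n).
have hf i : val (f i) = val i by [].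
rewrite (reindex_onto (fun S' : {set 'I_n} => f @: S')
           (fun S : {set 'I_n.+1} => [set i : 'I_n | f i \in S])); last first.
  move=> S /andP[_ Sn]; apply: natset_inj => k.
  rewrite natset_imset // natset_preimset //=.
  case: (ltnP k n) => //= kn; case: (eqVneq k n) => [->|kne]; first exact/esym/negbTE.
  by rewrite natset_out // ltn_neqAle eq_sym kne kn.
apply: eq_big => [S'|S' _].
  rewrite (eq_nonadjacent _ (natset_imset S' hf)) nonadjacentS; last exact: natset_out.
  rewrite natset_imset // natset_out // andbT.
  rewrite (_ : [set i | f i \in f @: S'] == S') ?andbT //.
  apply/eqP/natset_inj => k; rewrite natset_preimset //= natset_imset //.
  by case kn: (k < n)%N => //=; rewrite natset_out // leqNgt kn.
by rewrite (eq_dimer_term _ _ _ (natset_imset S' hf)) dimer_termS //; exact: natset_out.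
Qed.

Lemma dimer_sum_last_dimer w b n :
  \sum_(S : {set 'I_n.+2} | nonadjacent n.+2 (natset S) && natset S n.+1)
    dimer_term w b n.+2 (natset S)
  = - w n.+1 * dimer_sum w b n.
Proof.
rewrite dimer_sumE big_distrr /=.
pose f := widen_ord (leqW (leqnSn n)).
have hf i : val (f i) = val i by [].
have hU (S' : {set 'I_n}) :
    natset (ord_max |: f @: S') =1 [pred k | (n.+1 == k) || natset S' k].
  by move=> k; rewrite natset_setU1 natset_imset.
rewrite (reindex_onto (fun S' : {set 'I_n} => ord_max |: f @: S')
           (fun S : {set 'I_n.+2} => [set i : 'I_n | f i \in S])); last first.
  move=> S /andP[aS Sn1]; apply: natset_inj => k; rewrite hU /= natset_preimset //=.
  have Sn : natset S n = false.
    apply/negbTE/negP => Sn; move/nonadjacentP: aS => /(_ n (leqW (ltnSn n)) Sn).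
    by rewrite Sn1.
  case: (eqVneq n.+1 k) => [<-|ne] /=; first by rewrite Sn1.
  case: (ltnP k n) => //= kn; case: (eqVneq k n) => [->|ne2]; first by rewrite Sn.
  by rewrite natset_out //; lia.
apply: eq_big => [S'|S' _].
  rewrite (eq_nonadjacent _ (hU S')) nonadjacent_dimer; last exact: natset_out.
  rewrite hU /= eqxx /=.
  rewrite (_ : [set i | f i \in ord_max |: f @: S'] == S') ?andbT //.
  apply/eqP/natset_inj => k; rewrite natset_preimset //= hU /=.
  case kn: (k < n)%N => /=; first by rewrite (_ : (n.+1 == k) = false) //; lia.
  by rewrite natset_out // leqNgt kn.
by rewrite (eq_dimer_term _ _ _ (hU S')) dimer_term_dimer //; exact: natset_out.
Qed.

Lemma dimer_sum_split w b n : dimer_sum w b n.+1 = b n.+1 * dimer_sum w b n +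
  \sum_(S : {set 'I_n.+1} | nonadjacent n.+1 (natset S) && natset S n)
    dimer_term w b n.+1 (natset S).
Proof. by rewrite dimer_sumE (bigID (fun S => natset S n)) /= addrC dimer_sum_last_free. Qed.

Lemma dimer_sum1 w b : dimer_sum w b 1 = b 1 * b 0 - w 0.
Proof.
rewrite dimer_sum_split dimer_sum0 (eq_bigl (pred1 [set ord0])) ?big_pred1_eq.
  congr (_ + _); rewrite /dimer_term.
  have ord0E : natset [set (ord0 : 'I_1)] =1 pred1 0%N.
    by move=> k; rewrite natset_set1 eq_sym.
  rewrite big_mkcond !big_ord_recr !big_ord0 /= !ord0E /=.
  rewrite big_mkcond !big_ord_recr !big_ord0 /= !ord0E /=.
  rewrite big_mkcond !big_ord_recr !big_ord0 /= /covered_by /= !ord0E /=.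
  by rewrite add0n expr1 !mul1r mulr1 mulN1r.
move=> S /=; apply/andP/eqP => [[_ S0]|->].
  apply/natset_inj => k; rewrite natset_set1.
  by case: k => [|k]; [rewrite S0 | rewrite natset_out].
split; last by rewrite natset_set1.
by apply/nonadjacentP => i ilt _; rewrite (_ : i = 0%N) ?natset_out //; lia.
Qed.

Lemma dimer_sumSS w b n :
  dimer_sum w b n.+2 = b n.+2 * dimer_sum w b n.+1 - w n.+1 * dimer_sum w b n.
Proof. by rewrite dimer_sum_split dimer_sum_last_dimer mulNr. Qed.

Lemma dimer_sum_rev w b w' b' n :
  (forall i, (i < n)%N -> w' i = w (n.-1 - i)%N) ->
  (forall j, (j <= n)%N -> b' j = b (n - j)%N) ->
  dimer_sum w b n = dimer_sum w' b' n.
Proof.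
move=> hw hb; rewrite !dimer_sumE.
have revK : involutive (fun S : {set 'I_n} => @rev_ord n @: S).
  move=> S; apply: natset_inj => k; rewrite !natset_rev /=.
  case kn: (k < n)%N => /=; last by rewrite natset_out // leqNgt kn.
  rewrite natset_rev /= (_ : n.-1 - k < n)%N; last by lia.
  by rewrite (_ : n.-1 - (n.-1 - k) = k)%N //; lia.
rewrite (reindex_inj (inv_inj revK)); apply: eq_big => [S|S _].
  by rewrite (eq_nonadjacent _ (natset_rev S)) nonadjacent_rev //; apply: natset_out.
rewrite (eq_dimer_term _ _ _ (natset_rev S)) dimer_term_rev; last exact: natset_out.
by apply: eq_dimer_term_weights => [i|j] H; rewrite ?hw ?hb.
Qed.

End DimerExpansion.

Section ThreeTermRecurrence.
Variable K : fieldType.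
Variables A B C : nat -> K.

Fixpoint solved_pair n : K * K :=
  if n is m.+1 then
    let: (a, b) := solved_pair m in (b, (b * B m.+1 - a * C m.+1) / A m.+1)
  else (0, 1).

Fixpoint continuant_pair n : K * K :=
  if n is m.+1 then
    let: (a, b) := continuant_pair m in (b, B m.+1 * b - A m * C m.+1 * a)
  else (0, 1).

Lemma continuant_pairS_fst n : (continuant_pair n.+1).1 = (continuant_pair n).2.
Proof. by rewrite /=; case: (continuant_pair n). Qed.

Lemma continuant_pairS_snd n :
  (continuant_pair n.+1).2 =
  B n.+1 * (continuant_pair n).2 - A n * C n.+1 * (continuant_pair n).1.
Proof. by rewrite /=; case: (continuant_pair n). Qed.

Lemma dimer_sum_continuant n :
  dimer_sum (fun i => A i.+1 * C i.+2) (fun j => B j.+1) n = (continuant_pair n.+1).2.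
Proof.
set D := dimer_sum _ _.
suff : D n = (continuant_pair n.+1).2 /\ D n.+1 = (continuant_pair n.+2).2 by case.
elim: n => [|n [IH1 IH2]].
  by rewrite /D dimer_sum0 dimer_sum1 !continuant_pairS_snd continuant_pairS_fst /=; split; ring.
by split=> //; rewrite /D dimer_sumSS -/D IH1 IH2 [RHS]continuant_pairS_snd continuant_pairS_fst.
Qed.

Variable N : nat.
Hypothesis A_neq0 : forall n, (0 < n <= N)%N -> A n != 0.

Lemma solved_pair_scaled n : (n <= N)%N ->
  (solved_pair n).2 * \prod_(i < n) A i.+1 = (continuant_pair n).2 /\
  (solved_pair n).1 * \prod_(i < n) A i.+1 = A n * (continuant_pair n).1.
Proof.
elim: n => [|n IH] nN; first by rewrite big_ord0 /= mulr0 mul0r mulr1.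
have [IH2 IH1] := IH (ltnW nN).
have An : A n.+1 != 0 by apply: A_neq0; rewrite nN.
rewrite continuant_pairS_fst continuant_pairS_snd big_ord_recr /=.
move: IH1 IH2; case: (solved_pair n) => a b /= IH1 IH2; split.
  set P := \prod_(i < n) A i.+1.
  have -> : (b * B n.+1 - a * C n.+1) / A n.+1 * (P * A n.+1) =
            (b * P) * B n.+1 - C n.+1 * (a * P) by field.
  by rewrite IH1 IH2; ring.
by rewrite mulrA IH2 mulrC.
Qed.

Lemma singular_relation_solvable : A N.+1 = 0 ->
  (exists d, d * A N.+1 - (solved_pair N).2 * B N.+1 + (solved_pair N).1 * C N.+1 = 0)
  <-> (continuant_pair N.+1).2 = 0.
Proof.
move=> AN1; have [e2 e1] := solved_pair_scaled (leqnn N).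
have P_neq0 : \prod_(i < N) A i.+1 != 0.
  by rewrite prodf_seq_neq0; apply/allP => i _ /=; apply: A_neq0; rewrite ltn_ord.
set P := \prod_(i < N) A i.+1 in e1 e2 P_neq0.
set a := (solved_pair N).1 in e1 *; set b := (solved_pair N).2 in e2 *.
have -> : (continuant_pair N.+1).2 = - P * (- (b * B N.+1) + a * C N.+1).
  by rewrite continuant_pairS_snd -e2 mulrAC -e1; ring.
rewrite AN1; split=> [[d]|].
  by rewrite mulr0 add0r => ->; rewrite mulr0.
move/eqP; rewrite mulf_eq0 oppr_eq0 (negbTE P_neq0) /= => /eqP H.
by exists 0; rewrite mulr0 add0r.
Qed.

End ThreeTermRecurrence.

Section ComplexPowers.
Variable R : realType.
Implicit Types z : R[i].

Lemma cexpD z1 z2 : cexp (z1 + z2) = cexp z1 * cexp z2.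
Proof.
case: z1 => a1 b1; case: z2 => a2 b2; rewrite /cexp /=.
rewrite expRD cosD sinD; apply/eqP; rewrite eq_complex /=.
by apply/andP; split; apply/eqP; ring.
Qed.

Lemma cexp0 : cexp (0 : R[i]) = 1.
Proof. by rewrite /cexp /= expR0 cos0 sin0 mul1r mulr0. Qed.

Lemma norm_cexp z : `|cexp z| = (expR (complex.Re z))%:C%C.
Proof.
rewrite normc_def /cexp /= !exprMn -mulrDr cos2Dsin2 mulr1.
by rewrite sqrtr_sqr ger0_norm // expR_ge0.
Qed.

Lemma cexp_neq0 z : cexp z != 0.
Proof.
rewrite -normr_eq0 norm_cexp -(rmorph0 (real_complex R)) eq_complex /= eqxx andbT.
by rewrite gt_eqF // expR_gt0.
Qed.

Lemma Re_lt0_norm_cexp_lt1 z : `|cexp z| < 1 -> complex.Re z < 0.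
Proof. by rewrite norm_cexp -(rmorph1 (real_complex R)) ltcR expR_lt1. Qed.

Variable L : R[i].
Local Notation Q := (qpow L).

Lemma qpowD a c : Q (a + c) = Q a * Q c.
Proof. by rewrite /qpow mulrDl cexpD. Qed.

Lemma qpow0 : Q 0 = 1.
Proof. by rewrite /qpow mul0r cexp0. Qed.

Hypothesis ReL : complex.Re L < 0.

Lemma qpow_nat_neq1 k : (0 < k)%N -> Q k%:R != 1.
Proof.
move=> k0; have ReM : complex.Re (k%:R * L) = k%:R * complex.Re L.
  by rewrite -(rmorph_nat (real_complex R)); case: (L) => a b /=; ring.
apply/negP => /eqP e; have := norm_cexp (k%:R * L).
rewrite -/(Q k%:R) e normr1 ReM -(rmorph1 (real_complex R)) => /eqP.
rewrite eq_complex /= eqxx andbT eq_sym lt_eqF //.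
by rewrite expR_lt1 pmulr_rlt0 ?ltr0n.
Qed.

Lemma qpowN_nat_neq1 k : (0 < k)%N -> Q (- k%:R) != 1.
Proof.
move=> k0; apply: contra (qpow_nat_neq1 k0) => /eqP e.
by have := qpowD (- k%:R) k%:R; rewrite addNr qpow0 e mul1r => <-.
Qed.

End ComplexPowers.

Section QHeunRecurrence.
Variable R : realType.
Variables (L t1 t2 h1 h2 l1 l2 al1 al2 be E : R[i]) (N : nat).
Hypothesis be_N1 : be = N.+1%:R.

Local Notation Q := (qpow L).
Local Notation A := (recA L t1 t2 h1 h2 l1 l2 al1 al2 be).
Local Notation B := (recB L t1 t2 h1 h2 l1 l2 al1 al2 be E).
Local Notation C := (recC L h1 h2 l1 l2 al1 al2 be).

Lemma dpair_solved n : dpair L t1 t2 h1 h2 l1 l2 al1 al2 be E n = solved_pair A B C n.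
Proof. by elim: n => //= n ->. Qed.

Lemma recA_singular : A N.+1 = 0.
Proof. by rewrite /recA be_N1 subrr qpow0 subrr mulr0. Qed.

Lemma recA_neq0 n : complex.Re L < 0 -> t1 != 0 -> t2 != 0 ->
  (0 < n <= N)%N -> A n != 0.
Proof.
move=> ReL t1_neq0 t2_neq0 /andP[n_gt0 n_leN].
have f1 : 1 - Q n%:R != 0 by rewrite subr_eq0 eq_sym qpow_nat_neq1.
have f2 : 1 - Q (n%:R - be) != 0.
  rewrite subr_eq0 eq_sym (_ : n%:R - be = - (N.+1 - n)%:R); last first.
    by rewrite be_N1 natrB ?opprB // leqW.
  by rewrite qpowN_nat_neq1 // subn_gt0 ltnS.
by rewrite /recA !mulf_neq0 // cexp_neq0.
Qed.

Lemma recAC_reversed i : (i < N)%N ->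
  A i.+1 * C i.+2 =
  cx L t1 t2 h1 h2 l1 l2 al1 al2 be N (N.-1 - i).+1
    * cz L h1 h2 l1 l2 al1 al2 be N (N.-1 - i).+2.
Proof.
move=> iN; rewrite (_ : (N.-1 - i).+1 = N - i)%N; last by lia.
(* x (N-i) z (N-i+1) has the four factors 1 - q^_ of A (i+1) C (i+2), permuted. *)
have regroup (x1 x2 y1 y2 f1 f2 f3 f4 g1 g2 g3 g4 : R[i]) :
    x1 * x2 = y1 * y2 -> f1 = g4 -> f2 = g1 -> f3 = g2 -> f4 = g3 ->
    t1 * t2 * x1 * f1 * f2 * (x2 * f3 * f4) = t1 * t2 * y1 * g1 * g2 * (y2 * g3 * g4).
  move=> e -> -> -> ->.
  by transitivity (t1 * t2 * (x1 * x2) * g1 * g2 * g3 * g4); [ring | rewrite e; ring].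
rewrite /recA /recC /cx /cz be_N1 -!natr1 natrB ?(ltnW iN) //.
by apply: regroup; [rewrite -!qpowD; congr (Q _) | congr (1 - Q _) ..]; ring.
Qed.

Lemma recB_reversed j : (j <= N)%N ->
  B j.+1 = E + cy L t1 t2 h1 h2 l1 l2 al1 al2 be N (N - j).+1.
Proof.
move=> jN; rewrite /recB /cy -!natr1 natrB // -addrA [in RHS](addrC (Q _ * _)).
by congr (E + (Q _ * _ + Q _ * _)); field.
Qed.

Lemma cE_continuant : cE L t1 t2 h1 h2 l1 l2 al1 al2 be E N = (continuant_pair A B C N.+1).2.
Proof.
rewrite -dimer_sum_continuant.
apply: (@dimer_sum_rev _
  (fun i => cx L t1 t2 h1 h2 l1 l2 al1 al2 be N i.+1 * cz L h1 h2 l1 l2 al1 al2 be N i.+2)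
  (fun j => E + cy L t1 t2 h1 h2 l1 l2 al1 al2 be N j.+1)).
  exact: recAC_reversed.
exact: recB_reversed.
Qed.

End QHeunRecurrence.

Theorem proposition3p8 (R : realType) (q L t1 t2 : R[i])
    (hq0 : 0 < `|q|) (hq1 : `|q| < 1) (hL : cexp L = q)
    (ht1 : t1 != 0) (ht2 : t2 != 0)
    (N : nat) (h1 h2 l1 l2 al1 al2 be E : R[i])
    (hbe : be = N.+1%:R) :
  apparent L t1 t2 h1 h2 l1 l2 al1 al2 be E N <->
  cE L t1 t2 h1 h2 l1 l2 al1 al2 be E N = 0.
Proof.
have ReL : complex.Re L < 0 by apply: Re_lt0_norm_cexp_lt1; rewrite hL.
rewrite cE_continuant // /apparent /rel dpair_solved.
apply: singular_relation_solvable; last exact: recA_singular.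
by move=> n; apply: recA_neq0.
Qed.
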